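(* Let $W$ be the affine Weyl group of type $A_n^{(1)}$, let $w\in W$ and $j\in\{1,\dots,n\}$. Then (1) $\mathcal{L}_{\Lambda_0}(w)=\mathcal{L}_{\Lambda_0}(\sigma_jw)=\mathcal{L}_{\Lambda_0}(\sigma_1^jw)$; (2) $\mathcal{L}_{\Lambda_0}(wf^j)=\mathcal{L}_{\Lambda_0}(\pi_j(w))$, where $f=[\omega_1]$.
   Context: Affine Kac–Moody setting of type $A_n^{(1)}$: $\mathfrak h^*$ contains simple roots $\alpha_0,\dots,\alpha_n$, the null root $\delta=\sum_{i=0}^n\alpha_i$, the affine fundamental weight $\Lambda_0$; $c=\sum_i\alpha_i^\vee$ is the canonical central element, $\rho^\vee\in\mathfrak h$ satisfies $\langle\alpha_i,\rho^\vee\rangle=1$ for all $0\le i\le n$, and $h=n+1$. The finite part $V_0=\bigoplus_{i=1}^n\mathbb{R}\alpha_i$ is identified with $\{x\in\mathbb{R}^{n+1}\mid\sum x_i=0\}$ via $\alpha_i=\varepsilon_i-\varepsilon_{i+1}$, with standard dot product $(\cdot|\cdot)$ (extended to the standard invariant form on $\mathfrak h^*$). For $x\in V_0$, $t_x(v)=v+\langle v,c\rangle x-((v|x)+\frac12|x|^2\langle v,c\rangle)\delta$. $W_0=\langle s_1,\dots,s_n\rangle\cong S_{n+1}$, $M=V_0\cap\mathbb{Z}^{n+1}$, $W=\langle s_0,\dots,s_n\rangle=T(M)\rtimes W_0$. Fundamental weights $\omega_i=(\varepsilon_1+\dots+\varepsilon_i)-\frac{i}{n+1}(\varepsilon_1+\dots+\varepsilon_{n+1})$,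 $L=\bigoplus_i\mathbb{Z}\omega_i$, extended affine Weyl group $\widehat W=T(L)\rtimes W_0$, fundamental group $F=L/M$. For $j\in\{1,\dots,n\}$, $\sigma_j=t_{\omega_j}w_{0,j}w_0$, where $w_0$ is the longest element of $W_0$ and $w_{0,j}$ the longest element of the parabolic subgroup generated by $\{s_i\mid 1\le i\le n, i\ne j\}$; $\sigma_0=e$. Conjugation by $\sigma_j$ permutes $\{s_0,\dots,s_n\}$, and $\pi_j(w)=\sigma_j^{-1}w\sigma_j\in W$. For $g\in GL(\mathfrak h^* )$, $\mathcal{L}_{\Lambda_0}(g)=\langle\Lambda_0-g\Lambda_0,\rho^\vee\rangle$. The element $wf^j$ of $W\rtimes F$ (with $F$ acting through $[\omega_j]\mapsto\sigma_j$) has atomic length defined as $\mathcal{L}_{\Lambda_0}(wf^j):=\mathcal{L}_{\Lambda_0}(\sigma_j\pi_j(w))$, where $f^j=[\omega_j]$ corresponds to $\sigma_j$. *)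

From HB Require Import structures.
From mathcomp Require Import all_boot all_order all_algebra.
Set Implicit Arguments. Unset Strict Implicit. Unset Printing Implicit Defensive.
Import Order.TTheory GRing.Theory Num.Theory.
Local Open Scope ring_scope.

Section Affine.
Variables (R : realFieldType) (n : nat).

(* An element x + a*Lambda_0 + b*delta of h^*, where x is the finite part,
   written in the coordinates eps_1..eps_{n+1} (indices 0..n). *)
Record hs := HS { hx : 'rV[R]_(n.+1); hL : R; hd : R }.

Definition hadd (u v : hs) : hs := HS (hx u + hx v) (hL u + hL v) (hd u + hd v).
Definition hscale (k : R) (u : hs) : hs := HS (k *: hx u) (k * hL u) (k * hd u).
Definition hsub (u v : hs) : hs := hadd u (hscale (-1) v).

Definition dot (x y : 'rV[R]_(n.+1)) : R := \sum_(k < n.+1) x 0 k * y 0 k.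

(* standard invariant form: (x|y) standard, (Lambda0|delta)=1,
   (Lambda0|Lambda0)=(delta|delta)=0, finite part orthogonal to both *)
Definition form (u v : hs) : R := dot (hx u) (hx v) + hL u * hd v + hd u * hL v.

Definition Lambda0 : hs := HS 0 1 0.
Definition delta : hs := HS 0 0 1.

(* theta = eps_1 - eps_{n+1} ; alpha_0 = delta - theta ;
   alpha_i = eps_i - eps_{i+1} for 1 <= i <= n *)
Definition theta : 'rV[R]_(n.+1) :=
  \row_(k < n.+1) (((val k == 0%N) : nat)%:R - ((val k == n) : nat)%:R).
Definition alpha (i : nat) : hs :=
  if i == 0%N then HS (- theta) 0 1
  else HS (\row_(k < n.+1) (((val k == i.-1) : nat)%:R - ((val k == i) : nat)%:R)) 0 0.

(* simple reflections s_i v = v - <v, alpha_i^vee> alpha_i = v - (v|alpha_i) alpha_i *)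
Definition sref (i : nat) (v : hs) : hs := hsub v (hscale (form v (alpha i)) (alpha i)).

Definition inW (w : hs -> hs) : Prop :=
  exists l : seq nat, all (fun i => (i <= n)%N) l /\
    forall v, w v = foldr (fun i g => sref i \o g) id l v.

(* translation t_x(v) = v + <v,c> x - ((v|x) + 1/2 |x|^2 <v,c>) delta *)
Definition transl (x : 'rV[R]_(n.+1)) (v : hs) : hs :=
  HS (hx v + hL v *: x) (hL v)
     (hd v - (dot (hx v) x + 2%:R^-1 * dot x x * hL v)).

Definition omega (j : nat) : 'rV[R]_(n.+1) :=
  \row_(k < n.+1) (((val k < j)%N : nat)%:R - j%:R / (n.+1)%:R).

(* action of an element of W_0 = S_{n+1} given by a coordinate involution p *)
Definition pact (p : 'I_n.+1 -> 'I_n.+1) (v : hs) : hs :=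
  HS (\row_(k < n.+1) hx v 0 (p k)) (hL v) (hd v).

(* longest element w_0 of S_{n+1}: reversal of the coordinates *)
Definition w0 : hs -> hs := pact (@rev_ord n.+1).
(* longest element w_{0,j} of the parabolic subgroup <s_i | i <> j> = S_j x S_{n+1-j}:
   reverses coordinates 0..j-1 and j..n separately *)
Definition w0j (j : nat) : hs -> hs :=
  pact (fun k : 'I_n.+1 =>
          inord (if (val k < j)%N then (j.-1 - val k)%N else (j + n - val k)%N)).

Definition sigma (j : nat) : hs -> hs := transl (omega j) \o w0j j \o w0.
Definition sigma_inv (j : nat) : hs -> hs := w0 \o w0j j \o transl (- omega j).

Definition pi_ (j : nat) (w : hs -> hs) : hs -> hs := sigma_inv j \o w \o sigma j.

(* rho^vee : a linear functional on h^* with <alpha_i, rho^vee> = 1, 0 <= i <= n *)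
Definition is_rho_check (phi : hs -> R) : Prop :=
  [/\ forall u v, phi (hadd u v) = phi u + phi v,
      forall k u, phi (hscale k u) = k * phi u &
      forall i, (i <= n)%N -> phi (alpha i) = 1].

Definition atomic_length (phi : hs -> R) (g : hs -> hs) : R :=
  phi (hsub Lambda0 (g Lambda0)).

(* L_{Lambda0}(w f^j) := L_{Lambda0}(sigma_j pi_j(w)) *)
Definition atomic_length_ext (phi : hs -> R) (w : hs -> hs) (j : nat) : R :=
  atomic_length phi (sigma j \o pi_ j w).

End Affine.

From HB Require Import structures.
From mathcomp Require Import all_boot all_order all_algebra.
From mathcomp Require Import zify ring.
Set Implicit Arguments. Unset Strict Implicit. Unset Printing Implicit Defensive.
Import Order.TTheory GRing.Theory Num.Theory.
Local Open Scope ring_scope.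

(* Every map occurring in the theorem sends Lambda0 to a level-one weight
   v = Lambda0 + x + d delta with x in V0: the simple reflections, sigma_j and
   sigma_j^-1 all preserve this affine subspace.  On it every rho^vee gives
   <Lambda0 - v, rho^vee> = sum_k k x_k - (n+1) d (coordinates indexed from 0),
   because <eps_k - eps_(k+1), rho^vee> = 1 and <delta, rho^vee> = h = n+1.
   In sigma_j = t_(omega_j) w_(0,j) w_0 the factor w_(0,j) w_0 rotates the
   coordinates by j, and the translation by omega_j exactly compensates the
   resulting change of sum_k k x_k.  So left multiplication by sigma_j never
   changes the atomic length, and (2) is the case g = pi_j(w) of that fact. *)

Section LevelOne.
Variables (R : realFieldType) (n : nat).

Local Notation N := (n.+1)%:R.
Implicit Types (x y : 'rV[R]_n.+1) (v : hs R n).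

Definition coord_sum (x : 'rV[R]_n.+1) : R := \sum_(k < n.+1) x 0 k.

Definition level_one (v : hs R n) : Prop := hL v = 1 /\ coord_sum (hx v) = 0.

Definition rho_gap (v : hs R n) : R :=
  \sum_(k < n.+1) k%:R * hx v 0 k - N * hd v.

Lemma coord_sumD x y : coord_sum (x + y) = coord_sum x + coord_sum y.
Proof. by rewrite /coord_sum -big_split; apply: eq_bigr => k _; rewrite mxE. Qed.

Lemma coord_sumZ c x : coord_sum (c *: x) = c * coord_sum x.
Proof. by rewrite /coord_sum mulr_sumr; apply: eq_bigr => k _; rewrite mxE. Qed.

Lemma coord_sumB x y : coord_sum (x - y) = coord_sum x - coord_sum y.
Proof. by rewrite coord_sumD -scaleN1r coord_sumZ mulN1r. Qed.

Lemma coord_sum_delta (k : 'I_n.+1) : coord_sum 'e_k = 1.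
Proof.
rewrite /coord_sum (bigD1 k) //= mxE !eqxx big1 ?addr0 // => l /negbTE lk.
by rewrite mxE lk andbF.
Qed.

Lemma coord_sum_perm (p : 'I_n.+1 -> 'I_n.+1) x :
  injective p -> coord_sum (\row_k x 0 (p k)) = coord_sum x.
Proof.
move=> p_inj; rewrite /coord_sum [RHS](reindex_inj p_inj).
by apply: eq_bigr => k _; rewrite mxE.
Qed.

Lemma alpha0E : alpha R n 0 = HS ('e_ord_max - 'e_ord0) 0 1.
Proof.
by rewrite /alpha /=; congr HS; apply/rowP => k; rewrite !mxE -!val_eqE /= opprB.
Qed.

Lemma alphaSE k : (k < n)%N ->
  alpha R n k.+1 = HS ('e_(inord k) - 'e_(inord k.+1)) 0 0.
Proof.
move=> kn; rewrite /alpha /=; congr HS; apply/rowP => l.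
by rewrite !mxE -!val_eqE /= !inordK //; lia.
Qed.

Lemma coord_sum_alpha i : (i <= n)%N -> coord_sum (hx (alpha R n i)) = 0.
Proof.
case: i => [|k] kn; first by rewrite alpha0E coord_sumB !coord_sum_delta subrr.
by rewrite alphaSE // coord_sumB !coord_sum_delta subrr.
Qed.

Lemma level_one_sref i v : (i <= n)%N -> level_one v -> level_one (sref i v).
Proof.
move=> i_n [vL vS]; have aL : hL (alpha R n i) = 0 by rewrite /alpha; case: eqP.
split; first by rewrite /= aL vL !mulr0 addr0.
by rewrite /= coord_sumD !coord_sumZ coord_sum_alpha // vS !mulr0 addr0.
Qed.

Lemma level_one_inW w v : inW w -> level_one v -> level_one (w v).
Proof.
case=> l [l_n ->]; elim: l l_n => [|i l IHl] //= /andP[i_n l_n] v1.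
exact/level_one_sref/IHl.
Qed.

Lemma level_one_transl x v : coord_sum x = 0 -> level_one v -> level_one (transl x v).
Proof. by move=> xS [vL vS]; split; rewrite //= coord_sumD coord_sumZ xS vS mulr0 addr0. Qed.

Lemma level_one_pact p v : injective p -> level_one v -> level_one (pact p v).
Proof. by move=> p_inj [vL vS]; split; rewrite //= coord_sum_perm. Qed.

Lemma level_one_Lambda0 : level_one (Lambda0 R n).
Proof. by split; rewrite //= /coord_sum big1 // => k _; rewrite mxE. Qed.

Lemma sum_nat_lt (G : nat -> R) j : (j <= n.+1)%N ->
  \sum_(k < n.+1) ((k < j)%N : nat)%:R * G k = \sum_(0 <= k < j) G k.
Proof.
move=> jn; rewrite big_mkord (big_ord_widen _ _ jn) [RHS]big_mkcond /=.
by apply: eq_bigr => k _; case: ifP; rewrite ?mul1r ?mul0r.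
Qed.

Lemma coord_sum_omega j : (j <= n.+1)%N -> coord_sum (omega R n j) = 0.
Proof.
move=> jn; rewrite /coord_sum.
under eq_bigr do rewrite mxE -[X in X - _]mulr1.
rewrite sumrB (sum_nat_lt (fun=> 1)) // sumr_const_nat sumr_const card_ord subn0.
by rewrite -[_ *+ n.+1]mulr_natr divfK ?subrr // pnatr_eq0.
Qed.

Definition w0j_perm (j : nat) (k : 'I_n.+1) : 'I_n.+1 :=
  inord (if (k < j)%N then (j.-1 - k)%N else (j + n - k)%N).

(* w_(0,j) w_0 acts on coordinates as the cyclic shift k |-> k - j mod n+1. *)
Definition rotation (j : nat) (k : 'I_n.+1) : 'I_n.+1 := rev_ord (w0j_perm j k).

Lemma pact_comp p q v : pact p (pact q v) = pact (q \o p) v.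
Proof. by congr HS; apply/rowP => k; rewrite !mxE. Qed.

Lemma w0j_w0 j v : w0j j (w0 v) = pact (rotation j) v.
Proof. exact: pact_comp. Qed.

Lemma w0j_perm_val j k : (j <= n.+1)%N ->
  (w0j_perm j k : nat) = if (k < j)%N then (j.-1 - k)%N else (j + n - k)%N.
Proof. by move=> jn; rewrite /w0j_perm inordK //; have := ltn_ord k; case: ifP; lia. Qed.

Lemma w0j_perm_inj j : (j <= n.+1)%N -> injective (w0j_perm j).
Proof.
move=> jn k l /(congr1 (@nat_of_ord _)); rewrite !w0j_perm_val // => kl; apply: ord_inj.
by move: kl; have := ltn_ord k; have := ltn_ord l; case: (ltnP k j); case: (ltnP l j); lia.
Qed.

Lemma rotation_inj j : (j <= n.+1)%N -> injective (rotation j).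
Proof. by move=> jn k l /rev_ord_inj /(w0j_perm_inj jn). Qed.

Lemma rotation_val j k : (j <= n.+1)%N ->
  (rotation j k + j = k + n.+1 * (k < j))%N.
Proof.
by move=> jn; rewrite /= w0j_perm_val //; have := ltn_ord k; case: (ltnP k j) => /=; lia.
Qed.

Lemma level_one_sigma j v : (j <= n.+1)%N -> level_one v -> level_one (sigma j v).
Proof.
move=> jn v1; rewrite /sigma /= w0j_w0.
exact/level_one_transl/level_one_pact/v1/rotation_inj/jn/coord_sum_omega.
Qed.

Lemma level_one_sigma_inv j v : (j <= n.+1)%N -> level_one v -> level_one (sigma_inv j v).
Proof.
move=> jn v1; apply/level_one_pact/level_one_pact; [exact: rev_ord_inj|exact: w0j_perm_inj|].
apply: level_one_transl v1.
by rewrite -scaleN1r coord_sumZ coord_sum_omega ?mulr0.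
Qed.

Lemma rho_gap_transl y v : hL v = 1 ->
  rho_gap (transl y v) =
  rho_gap v + (\sum_(k < n.+1) k%:R * y 0 k + N / 2%:R * dot y y) + N * dot (hx v) y.
Proof.
move=> vL; rewrite /rho_gap /= vL scale1r.
under eq_bigr do rewrite mxE mulrDr.
by rewrite big_split /=; ring.
Qed.

Lemma rho_gap_rotation j v : (j <= n.+1)%N -> coord_sum (hx v) = 0 ->
  rho_gap (pact (rotation j) v) =
  rho_gap v - N * \sum_(k < n.+1) ((k < j)%N : nat)%:R * hx (pact (rotation j) v) 0 k.
Proof.
move=> jn vS; rewrite /rho_gap /=; set x' := \row_k hx v 0 (rotation j k).
have x'S : coord_sum x' = 0 by rewrite coord_sum_perm //; exact: rotation_inj.
have -> : \sum_(k < n.+1) k%:R * hx v 0 k = \sum_(k < n.+1) (rotation j k)%:R * x' 0 k.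
  by rewrite (reindex_inj (rotation_inj jn)); apply: eq_bigr => k _; rewrite mxE.
have rotE k : (rotation j k)%:R = k%:R + N * ((k < j)%N : nat)%:R - j%:R :> R.
  by rewrite -natrM -natrD -(rotation_val k jn) natrD addrK.
under [X in _ = X - _ - _]eq_bigr do rewrite rotE mulrBl mulrDl -mulrA.
by rewrite !sumrB !big_split /= -!mulr_sumr [\sum_(i < n.+1) x' 0 i]x'S; ring.
Qed.

Lemma dot_omega j x : coord_sum x = 0 ->
  dot x (omega R n j) = \sum_(k < n.+1) ((k < j)%N : nat)%:R * x 0 k.
Proof.
move=> xS; rewrite /dot; under eq_bigr do rewrite mxE mulrBr.
rewrite sumrB -mulr_suml [\sum_(k < n.+1) x 0 k]xS mul0r subr0.
by apply: eq_bigr => k _; rewrite mulrC.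
Qed.

Lemma gauss_sum m : \sum_(0 <= k < m) k%:R = m%:R * (m%:R - 1) / 2%:R :> R.
Proof.
elim: m => [|m IHm]; first by rewrite big_geq // mul0r mul0r.
by rewrite big_nat_recr //= IHm -natr1; field.
Qed.

Lemma omega_gap j : (j <= n.+1)%N ->
  \sum_(k < n.+1) k%:R * omega R n j 0 k + N / 2%:R * dot (omega R n j) (omega R n j) = 0.
Proof.
move=> jn; rewrite /dot.
under eq_bigr do rewrite mxE mulrBr [_ * (_ < _)%:R]mulrC.
under [X in _ + _ * X]eq_bigr => k _.
  rewrite mxE.
  have -> : forall b : bool, (b%:R - j%:R / N) * (b%:R - j%:R / N) =
      b%:R * (1 - 2%:R * j%:R / N) + (j%:R / N) ^+ 2 :> R by case; rewrite /=; ring.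
  over.
rewrite sumrB big_split /= -mulr_suml sumr_const card_ord.
rewrite (sum_nat_lt (fun k => k%:R)) // (sum_nat_lt (fun=> 1 - 2%:R * j%:R / N)) //.
rewrite sumr_const_nat subn0 -(big_mkord xpredT (fun k => (k%:R : R))) !gauss_sum.
rewrite -[(1 - _) *+ j]mulr_natr -[_ ^+ 2 *+ n.+1]mulr_natr.
by field; rewrite addrC natr1 pnatr_eq0.
Qed.

Lemma rho_gap_sigma j v : (j <= n.+1)%N -> level_one v -> rho_gap (sigma j v) = rho_gap v.
Proof.
move=> jn [vL vS]; rewrite /sigma /= w0j_w0.
have uS : coord_sum (hx (pact (rotation j) v)) = 0.
  by rewrite coord_sum_perm //; exact: rotation_inj.
by rewrite rho_gap_transl // omega_gap // addr0 dot_omega // rho_gap_rotation //; ring.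
Qed.

Section RhoCheck.
Variable phi : hs R n -> R.
Hypothesis hphi : is_rho_check phi.

Lemma rho_check_rowD x y : phi (HS (x + y) 0 0) = phi (HS x 0 0) + phi (HS y 0 0).
Proof. by case: hphi => phiD _ _; rewrite -phiD /hadd /= addr0. Qed.

Lemma rho_check_rowZ c x : phi (HS (c *: x) 0 0) = c * phi (HS x 0 0).
Proof. by case: hphi => _ phiZ _; rewrite -phiZ /hscale /= mulr0. Qed.

Lemma rho_check_rowN x : phi (HS (- x) 0 0) = - phi (HS x 0 0).
Proof. by rewrite -scaleN1r rho_check_rowZ mulN1r. Qed.

Lemma rho_check_rowB x y : phi (HS (x - y) 0 0) = phi (HS x 0 0) - phi (HS y 0 0).
Proof. by rewrite rho_check_rowD rho_check_rowN. Qed.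

Lemma rho_check_row_sum (F : 'I_n.+1 -> 'rV[R]_n.+1) :
  phi (HS (\sum_(k < n.+1) F k) 0 0) = \sum_(k < n.+1) phi (HS (F k) 0 0).
Proof.
apply: (big_morph (fun x => phi (HS x 0 0))); first exact: rho_check_rowD.
by rewrite -(scale0r 0) rho_check_rowZ mul0r.
Qed.

Lemma rho_check_unit (k : 'I_n.+1) : phi (HS 'e_k 0 0) = phi (HS 'e_ord0 0 0) - k%:R.
Proof.
have unit_nat m : (m <= n)%N -> phi (HS 'e_(inord m) 0 0) = phi (HS 'e_ord0 0 0) - m%:R.
  elim: m => [|m IHm] mn.
    by rewrite subr0; congr (phi (HS 'e_ _ _ _)); apply: val_inj; rewrite /= inordK.
  case: hphi => phiD _ phi_alpha.
  have step : phi (HS 'e_(inord m) 0 0) = phi (HS 'e_(inord m.+1) 0 0) + phi (alpha R n m.+1).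
    by rewrite -phiD alphaSE // /hadd /= !addr0 addrC subrK.
  by rewrite -natr1 opprD addrA -IHm ?(ltnW mn) // step phi_alpha // addrK.
by rewrite -{1}(inord_val k) unit_nat // -ltnS.
Qed.

Lemma rho_check_row x : coord_sum x = 0 ->
  phi (HS x 0 0) = - \sum_(k < n.+1) k%:R * x 0 k.
Proof.
move=> xS; rewrite [x in HS x]row_sum_delta rho_check_row_sum.
under eq_bigr do rewrite rho_check_rowZ rho_check_unit mulrBr.
rewrite sumrB -mulr_suml [\sum_(k < n.+1) x 0 k]xS mul0r sub0r.
by congr -%R; apply: eq_bigr => k _; rewrite mulrC.
Qed.

Lemma rho_check_delta : phi (delta R n) = N.
Proof.
have -> : delta R n = hadd (alpha R n 0) (HS ('e_ord0 - 'e_ord_max) 0 0).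
  rewrite alpha0E /hadd /=; congr HS; rewrite ?addr0 //.
  by rewrite -opprB addNr.
case: hphi => phiD _ phi_alpha.
by rewrite phiD phi_alpha // rho_check_rowB (rho_check_unit ord_max) subKr nat1r.
Qed.

Lemma rho_check_gap v : level_one v -> phi (hsub (Lambda0 R n) v) = rho_gap v.
Proof.
move=> [vL vS].
have -> : hsub (Lambda0 R n) v = hadd (HS (- hx v) 0 0) (hscale (- hd v) (delta R n)).
  rewrite /hsub /hadd /hscale /= vL; congr HS; last by ring.
    by rewrite add0r scaleN1r scaler0 addr0.
  by ring.
case: hphi => phiD phiZ _.
by rewrite phiD phiZ rho_check_delta rho_check_rowN rho_check_row // opprK /rho_gap; ring.
Qed.

Lemma atomic_length_level_one g : level_one (g (Lambda0 R n)) ->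
  atomic_length phi g = rho_gap (g (Lambda0 R n)).
Proof. exact: rho_check_gap. Qed.

Lemma atomic_length_sigma j g : (j <= n.+1)%N -> level_one (g (Lambda0 R n)) ->
  atomic_length phi (sigma j \o g) = atomic_length phi g.
Proof.
move=> jn g1; rewrite !atomic_length_level_one //= ?rho_gap_sigma //.
exact: level_one_sigma.
Qed.

Lemma atomic_length_iter_sigma j k g : (j <= n.+1)%N -> level_one (g (Lambda0 R n)) ->
  atomic_length phi (iter k (fun h => sigma j \o h) g) = atomic_length phi g.
Proof.
move=> jn g1; have iter_level_one m : level_one (iter m (fun h => sigma j \o h) g (Lambda0 R n)).
  by elim: m => //= m IHm; exact: level_one_sigma.
by elim: k => //= k IHk; rewrite atomic_length_sigma.
Qed.

End RhoCheck.

End LevelOne.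

Theorem theorem4p7 (R : realFieldType) (n : nat) (phi : hs R n -> R)
    (hphi : is_rho_check phi) (w : hs R n -> hs R n) (hw : inW w)
    (j : nat) (hj : (1 <= j <= n)%N) :
  (atomic_length phi w = atomic_length phi (sigma j \o w) /\
   atomic_length phi (sigma j \o w) =
     atomic_length phi (iter j (fun g => sigma 1 \o g) w)) /\
  atomic_length_ext phi w j = atomic_length phi (pi_ j w).
Proof.
have jn : (j <= n.+1)%N by case/andP: hj => _ /leqW.
have w1 : level_one (w (Lambda0 R n)) := level_one_inW hw (level_one_Lambda0 R n).
have pi1 : level_one (pi_ j w (Lambda0 R n)).
  exact/level_one_sigma_inv/level_one_inW/level_one_sigma/level_one_Lambda0.
split; first split.
- by rewrite atomic_length_sigma.
- by rewrite atomic_length_sigma // atomic_length_iter_sigma.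
- exact: atomic_length_sigma.
Qed.
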